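(* Let $G$ be a group with a conjugation-closed generating set $X$, let $g\in\mathrm{Mon}(X)$ with $n=\ell(g)$, and let $\mathbf x\in\mathrm{Fact}(G,g,\mathbf I)$. Then the map $L$ restricts to a poset isomorphism from the lower set ${\downarrow}(\mathbf x)=\{\mathbf y\in\mathrm{Fact}(G,g,\mathbf I):\mathbf y\le\mathbf x\}$ onto the lower set ${\downarrow}(L(\mathbf x))$ in $\mathrm{Comp}(\mathbb Z,n,\mathbf I)$.
   Context: $\mathrm{Mon}(X)$ is the generated submonoid; $\ell(x)$ is the minimal length of a product of elements of $X$ equal to $x$. A linear factorization of $g$ is a row vector $[x_L\ x_1\ \cdots\ x_k\ x_R]$ ($k\ge0$) of elements of $\mathrm{Mon}(X)$ with $x_1,\dots,x_k\ne1$ ($x_L,x_R$ may be trivial), $\ell(x_L)+\sum\ell(x_i)+\ell(x_R)=\ell(g)$, $x_Lx_1\cdots x_kx_R=g$. With $x_0=x_L$, $x_{k+1}=x_R$, the merge at position $i\in\{0,\dots,k\}$ replaces consecutive entries $x_i,x_{i+1}$ by the single entry $x_ix_{i+1}$. $\mathrm{Fact}(G,g,\mathbf I)$ is the set of linear factorizations ordered by $\mathbf y\le\mathbf x$ iff $\mathbf y$ is obtained from $\mathbf x$ by a finite sequence of merges. For $G=\mathbb Z$, $X=\{1\}$ (additive notation), these are linear compositions of $n$, forming $\mathrm{Comp}(\mathbb Z,n,\mathbf I)$. $L([x_L\ x_1\cdots x_k\ x_R])=[\ell(x_L)\ \ell(x_1)\cdots\ell(x_k)\ \ell(x_R)]$.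 *)

From mathcomp Require Import all_boot all_order all_algebra.
From Stdlib Require Import ClassicalEpsilon Relation_Operators.
Set Implicit Arguments. Unset Strict Implicit. Unset Printing Implicit Defensive.
Import GRing.Theory Num.Theory.

Section Generic.
Variables (G : Type) (mul : G -> G -> G) (one : G) (inv : G -> G).

Definition is_group : Prop :=
  [/\ (forall a b c, mul a (mul b c) = mul (mul a b) c),
      (forall a, mul one a = a), (forall a, mul a one = a),
      (forall a, mul (inv a) a = one) & (forall a, mul a (inv a) = one)].

(* X generates G as a group: every element is a product of elements of X
   and their inverses (the bool flags an inverse) *)
Definition generates (X : G -> Prop) : Prop :=
  forall h, exists s : seq (bool * G),
    List.Forall (fun p => X p.2) s /\
    foldr (fun p acc => mul (if p.1 then inv p.2 else p.2) acc) one s = h.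

Definition conj_closed (X : G -> Prop) : Prop :=
  forall x h, X x -> X (mul (mul (inv h) x) h).

Definition prodw (s : seq G) : G := foldr mul one s.

Definition in_mon (X : G -> Prop) (x : G) : Prop :=
  exists s, List.Forall X s /\ prodw s = x.

Definition is_ell (X : G -> Prop) (x : G) (n : nat) : Prop :=
  (exists s, [/\ List.Forall X s, prodw s = x & size s = n]) /\
  (forall s, List.Forall X s -> prodw s = x -> n <= size s).

(* ell(x) (meaningful for x in Mon(X)) *)
Definition ell (X : G -> Prop) (x : G) : nat :=
  epsilon (inhabits 0%N) (is_ell X x).

(* linear factorization [x_L x_1 ... x_k x_R] of g, as a sequence of
   length k+2 *)
Definition is_lin_fact (X : G -> Prop) (g : G) (s : seq G) : Prop :=
  [/\ 2 <= size s,
      List.Forall (in_mon X) s,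
      (forall i, 0 < i < (size s).-1 -> nth one s i <> one),
      sumn (map (ell X) s) = ell X g
    & prodw s = g].

Definition merge (i : nat) (s : seq G) : seq G :=
  take i s ++ (match drop i s with
               | a :: b :: r => mul a b :: r
               | r => r end).

Definition merge_step (y x : seq G) : Prop :=
  exists i, i.+2 <= size x /\ y = merge i x.

Definition fact_le (y x : seq G) : Prop :=
  clos_refl_trans (seq G) merge_step y x.

Definition down_fact (X : G -> Prop) (g : G) (x y : seq G) : Prop :=
  is_lin_fact X g y /\ fact_le y x.

End Generic.

Definition Xint : int -> Prop := fun a => a = 1%R.

Definition is_comp (n : nat) (c : seq int) : Prop :=
  is_lin_fact (fun a b : int => (a + b)%R) 0%R Xint (Posz n) c.

Definition comp_le (c d : seq int) : Prop :=
  fact_le (fun a b : int => (a + b)%R) c d.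

Definition down_comp (n : nat) (d c : seq int) : Prop :=
  is_comp n c /\ comp_le c d.

Definition Lmap (G : Type) (mul : G -> G -> G) (one : G) (X : G -> Prop)
  (s : seq G) : seq int :=
  map (fun a => Posz (ell mul one X a)) s.

(* Every y below x is a coarsening of x: y multiplies together consecutive
   blocks of entries of x, the block sizes p form a composition of the number
   of entries of x, and merges of y are merges of p.  Because x is geodesic
   (its lengths add up to ell g), subadditivity of ell forces each block of a
   coarsening to have length exactly the sum of the lengths of its entries, so
   L (coarsen p x) = coarsen p (L x), and a coarsening of x is a linear
   factorization exactly when its image under L is a composition.  Both lower
   sets are thus parametrized by the same p, and p is recovered from
   coarsen p (L x) since the interior entries of L x are positive: only a
   trivial x_R could let two block decompositions agree, and they would then
   have different numbers of blocks. *)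

From Pilot Require Import Defs.
From mathcomp Require Import all_boot all_order all_algebra zify.
From Stdlib Require Import Classical ClassicalEpsilon Relation_Operators Operators_Properties Wf_nat.
Set Implicit Arguments. Unset Strict Implicit. Unset Printing Implicit Defensive.
Import GRing.Theory.

Definition block_sizes (p : seq nat) (n : nat) : bool :=
  all (fun k => 0 < k) p && (sumn p == n).

Lemma merge0 (T : Type) (f : T -> T -> T) a b r : Defs.merge f 0 [:: a, b & r] = f a b :: r.
Proof. by []. Qed.

Lemma merge_cons (T : Type) (f : T -> T -> T) i a r :
  Defs.merge f i.+1 (a :: r) = a :: Defs.merge f i r.
Proof. by []. Qed.

Arguments Defs.merge : simpl never.

Lemma block_sizes_merge i p n : block_sizes p n -> block_sizes (Defs.merge addn i p) n.
Proof.
elim: i p n => [|i IH] [|k p] n //.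
  case: p => [|k' p] //; rewrite merge0 /block_sizes /= addn_gt0 addnA.
  by case/andP => /and3P [-> _ ->].
rewrite merge_cons /block_sizes /= => /andP [/andP [k0 p0] /eqP <-].
have /andP [-> /eqP ->] : block_sizes (Defs.merge addn i p) (sumn p).
  by apply: IH; rewrite /block_sizes p0 eqxx.
by rewrite k0 eqxx.
Qed.

Section Coarsening.
Variables (T : Type) (mul : T -> T -> T) (one : T).
Hypothesis mulA : forall a b c, mul a (mul b c) = mul (mul a b) c.
Hypothesis mul1l : forall a, mul one a = a.
Hypothesis mul1r : forall a, mul a one = a.
Local Notation pw := (prodw mul one).

Fixpoint coarsen (p : seq nat) (s : seq T) : seq T :=
  if p is k :: p' then pw (take k s) :: coarsen p' (drop k s) else [::].

Lemma prodw_cons a s : pw (a :: s) = mul a (pw s).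
Proof. by []. Qed.

Lemma prodw_cat s1 s2 : pw (s1 ++ s2) = mul (pw s1) (pw s2).
Proof.
elim: s1 => [|a s IH]; first exact: (esym (mul1l _)).
by rewrite cat_cons !prodw_cons IH mulA.
Qed.

Lemma size_coarsen p s : size (coarsen p s) = size p.
Proof. by elim: p s => [|k p IH] s //=; rewrite IH. Qed.

Lemma prodw_coarsen p s : pw (coarsen p s) = pw (take (sumn p) s).
Proof.
elim: p s => [|k p IH] s; first by rewrite take0.
by rewrite [coarsen _ _]/= prodw_cons IH -prodw_cat -takeD.
Qed.

Lemma coarsen_ones s : coarsen (nseq (size s) 1) s = s.
Proof. by elim: s => [|a s IH] //=; rewrite take0 drop0 IH /prodw /= mul1r. Qed.

Lemma merge_coarsen i p s :
  Defs.merge mul i (coarsen p s) = coarsen (Defs.merge addn i p) s.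
Proof.
elim: i p s => [|i IH] [|k [|k' p]] s //.
  by rewrite /= merge0 /= takeD prodw_cat drop_drop addnC.
by rewrite -[coarsen _ s]/(pw (take k s) :: coarsen (k' :: p) (drop k s)) !merge_cons IH.
Qed.

Lemma fact_le_cons a y x : fact_le mul y x -> fact_le mul (a :: y) (a :: x).
Proof.
elim=> [y0 x0 [i [ix ->]] | x0 | y0 w x0 _ yw _ wx].
- by apply: rt_step; exists i.+1.
- exact: rt_refl.
- exact: rt_trans yw wx.
Qed.

Lemma fact_le_prodw t r : 0 < size t -> fact_le mul (pw t :: r) (t ++ r).
Proof.
case: t => [//|a t _]; elim: t a => [|b t IH] a.
  by rewrite /prodw /= mul1r; apply: rt_refl.
rewrite -[pw _]/(mul a (mul b (pw t))) mulA -prodw_cons.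
apply: rt_trans (IH (mul a b)) _.
by apply: rt_step; exists 0.
Qed.

Lemma coarsen_fact_le p s : block_sizes p (size s) -> fact_le mul (coarsen p s) s.
Proof.
elim: p s => [|k p IH] s; first by case: s => // _; apply: rt_refl.
case/andP=> [/= /andP [k0 p0] /eqP ps].
apply: (rt_trans _ _ _ (pw (take k s) :: drop k s)).
  by apply/fact_le_cons/IH; rewrite /block_sizes p0 size_drop -ps addKn eqxx.
by rewrite -{3}(cat_take_drop k s); apply: fact_le_prodw; rewrite size_take; case: ifP; lia.
Qed.

Lemma fact_leP y x :
  fact_le mul y x <-> exists2 p, block_sizes p (size x) & y = coarsen p x.
Proof.
split=> [yx | [p px ->]]; last exact: coarsen_fact_le.
elim: (clos_rt_rt1n _ _ _ _ yx) => [x0 | y0 w x0 [i [_ ->]] _ [p px ->]].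
  exists (nseq (size x0) 1); last by rewrite coarsen_ones.
  by rewrite /block_sizes all_nseq orbT sumn_nseq mul1n eqxx.
by exists (Defs.merge addn i p); [exact: block_sizes_merge | rewrite merge_coarsen].
Qed.

End Coarsening.

Lemma sumn_coarsen p l : sumn (coarsen addn 0 p l) = sumn (take (sumn p) l).
Proof. exact: (prodw_coarsen addnA add0n). Qed.

Section MonoidMorphism.
Variables (T U : Type) (mulT : T -> T -> T) (oneT : T) (mulU : U -> U -> U) (oneU : U).
Variable f : T -> U.
Hypothesis f1 : f oneT = oneU.
Hypothesis fM : {morph f : a b / mulT a b >-> mulU a b}.

Lemma map_prodw s : f (prodw mulT oneT s) = prodw mulU oneU (map f s).
Proof. by elim: s => //= a s IH; rewrite -IH -fM. Qed.

Lemma map_coarsen p s :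
  map f (coarsen mulT oneT p s) = coarsen mulU oneU p (map f s).
Proof. by elim: p s => //= k p IH s; rewrite map_prodw IH map_take map_drop. Qed.

End MonoidMorphism.

Lemma all2_leq_sumn_eq (a b : seq nat) : all2 leq a b -> sumn b <= sumn a -> a = b.
Proof.
have leq_sumn (a' b' : seq nat) : all2 leq a' b' -> sumn a' <= sumn b'.
  by elim: a' b' => [|x a' IH] [|y b'] //= /andP [xy /IH ab]; rewrite leq_add.
elim: a b => [|x a IH] [|y b] //= /andP [xy ab] ba.
have ab_sum := leq_sumn _ _ ab.
have xy_eq : x = y by lia.
by rewrite xy_eq (IH b) //; lia.
Qed.

Section CoarsenInjective.
Variable l : seq nat.
Hypothesis l_interior : forall i, 0 < i < (size l).-1 -> 0 < nth 0 l i.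

Lemma eq_sumn_take_last k k' : 0 < k -> k < k' -> k' <= size l ->
  sumn (take k l) = sumn (take k' l) -> k = (size l).-1.
Proof.
move=> k0 kk' k'l; rewrite -(subnKC (ltnW kk')) takeD sumn_cat.
rewrite (drop_nth 0); last exact: leq_trans kk' k'l.
case E: (k' - k) => [|m]; first lia.
rewrite /= => sum0; have lk0 : nth 0 l k = 0 by lia.
case: (ltnP k (size l).-1) => [klt|]; last lia.
have : 0 < nth 0 l k by apply: l_interior; rewrite k0 klt.
by rewrite lk0.
Qed.

Lemma coarsen_head_leq k p k' q :
  block_sizes (k :: p) (size l) -> block_sizes (k' :: q) (size l) ->
  coarsen addn 0 (k :: p) l = coarsen addn 0 (k' :: q) l -> k <= k'.
Proof.
rewrite /block_sizes /= => /andP [/andP [k0 p0] /eqP kp] /andP [/andP [k'0 q0] /eqP k'q].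
case=> sum_eq /(congr1 size); rewrite !size_coarsen => size_pq.
rewrite leqNgt; apply/negP => k'k.
have k_le : k <= size l by lia.
have k'_last := eq_sumn_take_last k'0 k'k k_le (esym sum_eq).
case: p kp p0 size_pq => [|j p] /= kp; last by case/andP => j0 _; lia.
by case: q k'q q0 => [|j q] /= k'q; lia.
Qed.

End CoarsenInjective.

Lemma coarsen_inj (l : seq nat) p q :
  (forall i, 0 < i < (size l).-1 -> 0 < nth 0 l i) ->
  block_sizes p (size l) -> block_sizes q (size l) ->
  coarsen addn 0 p l = coarsen addn 0 q l -> p = q.
Proof.
elim: p q l => [|k p IH] [|k' q] l l_interior // pl ql pq.
have kk' : k = k'.
  apply/eqP; rewrite eqn_leq (coarsen_head_leq l_interior pl ql pq).
  exact: (coarsen_head_leq l_interior ql pl (esym pq)).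
move: pl ql pq; rewrite -kk' /block_sizes /= => /andP [/andP [k0 p0] /eqP kp].
move=> /andP [/andP [_ q0] /eqP kq] [pq].
congr (_ :: _); apply: (IH q (drop k l)) => //.
- by move=> i; rewrite size_drop nth_drop => i_int; apply: l_interior; lia.
- by rewrite /block_sizes p0 size_drop -kp addKn eqxx.
- by rewrite /block_sizes q0 size_drop -kq addKn eqxx.
Qed.

Lemma Forall_take (A : Type) (P : A -> Prop) k s :
  List.Forall P s -> List.Forall P (take k s).
Proof. by rewrite -{1}(cat_take_drop k s) => /List.Forall_app []. Qed.

Lemma Forall_drop (A : Type) (P : A -> Prop) k s :
  List.Forall P s -> List.Forall P (drop k s).
Proof. by rewrite -{1}(cat_take_drop k s) => /List.Forall_app []. Qed.

Lemma Forall_nth (A : Type) (P : A -> Prop) d s i :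
  List.Forall P s -> i < size s -> P (nth d s i).
Proof.
elim: s i => [|a s IH] [|i] //= /List.Forall_cons_iff [Pa Ps] lt_i_s //.
exact: IH.
Qed.

Section WordLength.
Variables (T : Type) (mul : T -> T -> T) (one : T) (X : T -> Prop).
Local Notation pw := (prodw mul one).
Local Notation el := (ell mul one X).
Local Notation inm := (in_mon mul one X).

Lemma ell_spec a : inm a -> is_ell mul one X a (el a).
Proof.
move=> [s [Xs <-]]; apply: epsilon_spec.
pose P m := exists t, [/\ List.Forall X t, pw t = pw s & size t = m].
have [m [[Pm m_least] _]] : has_unique_least_element le P.
  apply: dec_inh_nat_subset_has_unique_least_element => [m|]; first exact: classic.
  by exists (size s), s.
exists m; split=> // t Xt ts; apply/leP/m_least.
by exists t.
Qed.

Lemma ell_eq a m : is_ell mul one X a m -> el a = m.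
Proof.
move=> am; have [[s [Xs sa sm]] m_min] := am.
have [[t [Xt ta te]] e_min] := ell_spec (ex_intro _ s (conj Xs sa)).
apply/eqP; rewrite eqn_leq; apply/andP; split.
- by rewrite -sm; apply: e_min.
- by rewrite -te; apply: m_min.
Qed.

Lemma ell_one : el one = 0.
Proof. by apply: ell_eq; split=> //; exists [::]. Qed.

Lemma ell_eq0 a : inm a -> el a = 0 -> a = one.
Proof.
by move=> /ell_spec [[[|b s] [_ <- sa]] _] a0 //; rewrite a0 in sa.
Qed.

Hypothesis mulA : forall a b c, mul a (mul b c) = mul (mul a b) c.
Hypothesis mul1l : forall a, mul one a = a.

Lemma in_mon_mul a b : inm a -> inm b -> inm (mul a b).
Proof.
move=> [s [Xs <-]] [t [Xt <-]]; exists (s ++ t).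
by rewrite prodw_cat //; split=> //; apply/List.Forall_app.
Qed.

Lemma ell_mul_le a b : inm a -> inm b -> el (mul a b) <= el a + el b.
Proof.
move=> ma mb; have [_ ab_min] := ell_spec (in_mon_mul ma mb).
have [[s [Xs sa <-]] _] := ell_spec ma; have [[t [Xt tb <-]] _] := ell_spec mb.
by rewrite -size_cat ab_min ?prodw_cat ?sa ?tb //; apply/List.Forall_app.
Qed.

Lemma in_mon_prodw s : List.Forall inm s -> inm (pw s).
Proof.
elim: s => [_|a s IH /List.Forall_cons_iff [ma ms]]; first by exists [::].
exact: in_mon_mul ma (IH ms).
Qed.

Lemma ell_prodw_le s : List.Forall inm s -> el (pw s) <= sumn (map el s).
Proof.
elim: s => [_|a s IH /List.Forall_cons_iff [ma ms]]; first by rewrite ell_one.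
rewrite prodw_cons /=; apply: leq_trans (ell_mul_le ma (in_mon_prodw ms)) _.
by rewrite leq_add2l IH.
Qed.

Lemma Forall_coarsen p s :
  List.Forall inm s -> List.Forall inm (coarsen mul one p s).
Proof.
elim: p s => [|k p IH] s ms /=; constructor.
- exact/in_mon_prodw/Forall_take.
- exact/IH/Forall_drop.
Qed.

Lemma ell_coarsen_le p s : List.Forall inm s ->
  all2 leq (map el (coarsen mul one p s)) (coarsen addn 0 p (map el s)).
Proof.
elim: p s => [|k p IH] s ms //=; apply/andP; split.
- by rewrite -map_take; apply/ell_prodw_le/Forall_take.
- by rewrite -map_drop; apply/IH/Forall_drop.
Qed.

Definition geodesic (g : T) (s : seq T) : Prop :=
  [/\ List.Forall inm s, sumn (map el s) = el g & pw s = g].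

Lemma lin_fact_geodesic g s : is_lin_fact mul one X g s -> geodesic g s.
Proof. by case. Qed.

Lemma ell_coarsen g s p : geodesic g s -> sumn p = size s ->
  map el (coarsen mul one p s) = coarsen addn 0 p (map el s).
Proof.
move=> [ms s_ell s_g] ps; apply: all2_leq_sumn_eq; first exact: ell_coarsen_le.
rewrite sumn_coarsen ps -(size_map el) take_size s_ell.
have -> : g = pw (coarsen mul one p s) by rewrite prodw_coarsen // ps take_size.
by apply/ell_prodw_le/Forall_coarsen.
Qed.

Lemma geodesic_coarsen g s p : geodesic g s -> sumn p = size s ->
  geodesic g (coarsen mul one p s).
Proof.
move=> gs ps; have [ms s_ell s_g] := gs; split; first exact: Forall_coarsen.
- by rewrite (ell_coarsen gs ps) sumn_coarsen ps -(size_map el) take_size.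
- by rewrite prodw_coarsen // ps take_size.
Qed.

Lemma lin_fact_ell_gt0 g s i : is_lin_fact mul one X g s ->
  0 < i < (size s).-1 -> 0 < el (nth one s i).
Proof.
case=> _ ms s_int _ _ i_int; rewrite lt0n; apply/eqP => /ell_eq0 si1.
by apply: (s_int i i_int); apply: si1; apply: Forall_nth ms _; lia.
Qed.

End WordLength.

Local Notation addZ := (fun a b : int => (a + b)%R).

Lemma comp_leP c d :
  comp_le c d <-> exists2 p, block_sizes p (size d) & c = coarsen addZ 0%R p d.
Proof. exact: (@fact_leP _ addZ 0%R (@addrA _) (@add0r _) (@addr0 _)). Qed.

Lemma prodw_Posz l : prodw addZ 0%R (map Posz l) = Posz (sumn l).
Proof. by rewrite -(@map_prodw _ _ addn 0 addZ 0%R _ erefl PoszD). Qed.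

Lemma map_Posz_coarsen p l :
  map Posz (coarsen addn 0 p l) = coarsen addZ 0%R p (map Posz l).
Proof. exact: (@map_coarsen _ _ addn 0 addZ 0%R _ erefl PoszD). Qed.

Lemma prodw_Xint s : List.Forall Xint s -> prodw addZ 0%R s = Posz (size s).
Proof.
elim: s => [|a s IH] // /List.Forall_cons_iff [-> Xs].
by rewrite prodw_cons IH // intS.
Qed.

Lemma Forall_Xint_nseq m : List.Forall Xint (nseq m 1%R).
Proof. by elim: m => [|m IH]; constructor. Qed.

Lemma in_mon_Posz m : in_mon addZ 0%R Xint (Posz m).
Proof.
have X1 := Forall_Xint_nseq m.
by exists (nseq m 1%R); rewrite prodw_Xint // size_nseq.
Qed.

Lemma ell_Posz m : ell addZ 0%R Xint (Posz m) = m.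
Proof.
have X1 := Forall_Xint_nseq m.
apply: ell_eq; split; first by exists (nseq m 1%R); rewrite prodw_Xint // size_nseq.
by move=> s Xs; rewrite prodw_Xint // => -[->].
Qed.

Section LengthMap.
Variables (T : Type) (mul : T -> T -> T) (one : T) (X : T -> Prop).
Hypothesis mulA : forall a b c, mul a (mul b c) = mul (mul a b) c.
Hypothesis mul1l : forall a, mul one a = a.
Hypothesis mul1r : forall a, mul a one = a.
Local Notation el := (ell mul one X).
Local Notation L := (Lmap mul one X).
Local Notation geodesic := (geodesic mul one X).

Lemma LmapE s : L s = map Posz (map el s).
Proof. by rewrite -map_comp. Qed.

Lemma Lmap_coarsen g s p : geodesic g s -> sumn p = size s ->
  L (coarsen mul one p s) = coarsen addZ 0%R p (L s).
Proof.
by move=> gs ps; rewrite !LmapE (ell_coarsen mulA mul1l gs ps) map_Posz_coarsen.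
Qed.

Lemma comp_of_lin_fact g s : is_lin_fact mul one X g s -> is_comp (el g) (L s).
Proof.
move=> sf; have [s2 _ _ s_ell _] := sf; split.
- by rewrite size_map.
- by elim: s {s2 sf s_ell} => //= a s IH; constructor=> //; apply: in_mon_Posz.
- move=> i; rewrite size_map => i_int; rewrite (nth_map one); last by lia.
  by have := lin_fact_ell_gt0 sf i_int; case: (el _).
- by rewrite LmapE -map_comp (eq_map ell_Posz) map_id s_ell ell_Posz.
- by rewrite LmapE prodw_Posz s_ell.
Qed.

Lemma lin_fact_of_comp g s : geodesic g s -> is_comp (el g) (L s) ->
  is_lin_fact mul one X g s.
Proof.
move=> [ms s_ell s_g] [Ls2 _ Ls_int _ _]; rewrite size_map in Ls2 Ls_int.
split=> // i i_int si1; apply: (Ls_int i i_int).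
by rewrite (nth_map one) ?si1 ?ell_one //; lia.
Qed.

Lemma Lmap_mono g y z : is_lin_fact mul one X g z -> fact_le mul y z ->
  comp_le (L y) (L z).
Proof.
move=> zf /(fact_leP mulA mul1l mul1r) [p pz ->].
have ps : sumn p = size z by case/andP: pz => _ /eqP.
rewrite (Lmap_coarsen (lin_fact_geodesic zf) ps).
by apply/comp_leP; exists p; rewrite ?size_map.
Qed.

Lemma Lmap_lift g z c : is_lin_fact mul one X g z -> is_comp (el g) c ->
  comp_le c (L z) -> exists w, [/\ is_lin_fact mul one X g w, fact_le mul w z & L w = c].
Proof.
move=> zf c_comp /comp_leP [p]; rewrite size_map => pz c_eq.
have ps : sumn p = size z by case/andP: pz => _ /eqP.
have gz := lin_fact_geodesic zf.
have Lw : L (coarsen mul one p z) = c by rewrite c_eq (Lmap_coarsen gz ps).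
exists (coarsen mul one p z); split=> //; last exact: coarsen_fact_le.
by apply: lin_fact_of_comp; [exact: (geodesic_coarsen mulA mul1l gz ps) | rewrite Lw].
Qed.

Lemma Lmap_inj_down g x y z : is_lin_fact mul one X g x ->
  fact_le mul y x -> fact_le mul z x -> L y = L z -> y = z.
Proof.
move=> xf /(fact_leP mulA mul1l mul1r) [p px ->] /(fact_leP mulA mul1l mul1r) [q qx ->].
have gx := lin_fact_geodesic xf.
have sumn_size r : block_sizes r (size x) -> sumn r = size x by case/andP=> _ /eqP.
have Posz_inj : injective Posz by move=> m n [].
rewrite !LmapE => /(inj_map Posz_inj).
rewrite !(ell_coarsen mulA mul1l gx) ?sumn_size // => co_pq.
have -> // : p = q.
apply: (coarsen_inj _ _ _ co_pq); rewrite ?size_map //.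
move=> i i_int; rewrite (nth_map one); last by lia.
exact: lin_fact_ell_gt0 xf i_int.
Qed.

End LengthMap.

Theorem lemma3p10 (G : Type) (mul : G -> G -> G) (one : G) (inv : G -> G)
  (X : G -> Prop) (g : G) (x : seq G) :
  is_group mul one inv -> generates mul one inv X -> conj_closed mul inv X ->
  in_mon mul one X g ->
  is_lin_fact mul one X g x ->
  let n := ell mul one X g in
  let L := Lmap mul one X in
  (* L maps the lower set of x into the lower set of L(x) *)
  (forall y, down_fact mul one X g x y -> down_comp n (L x) (L y)) /\
  (* injective on the lower set *)
  (forall y z, down_fact mul one X g x y -> down_fact mul one X g x z ->
     L y = L z -> y = z) /\
  (* onto the lower set of L(x) *)
  (forall c, down_comp n (L x) c -> exists y, down_fact mul one X g x y /\ L y = c) /\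
  (* order-preserving and order-reflecting *)
  (forall y z, down_fact mul one X g x y -> down_fact mul one X g x z ->
     (fact_le mul y z <-> comp_le (L y) (L z))).
Proof.
move=> [mulA mul1l mul1r _ _] _ _ _ xf /=.
have L_inj y z : down_fact mul one X g x y -> down_fact mul one X g x z ->
    Lmap mul one X y = Lmap mul one X z -> y = z.
  by move=> [_ yx] [_ zx]; exact: (Lmap_inj_down mulA mul1l mul1r xf yx zx).
split; [|split; [exact: L_inj | split]].
- move=> y [yf yx]; split; first exact: (comp_of_lin_fact yf).
  exact: (Lmap_mono mulA mul1l mul1r xf yx).
- move=> c [c_comp cx].
  have [w [wf wx Lw]] := Lmap_lift mulA mul1l mul1r xf c_comp cx.
  by exists w.
- move=> y z [yf yx] [zf zx]; split; first exact: (Lmap_mono mulA mul1l mul1r zf).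
  move=> Lyz; have [w [wf wz Lw]] := Lmap_lift mulA mul1l mul1r zf (comp_of_lin_fact yf) Lyz.
  have wx : fact_le mul w x by apply: rt_trans wz zx.
  by rewrite -(L_inj w y).
Qed.
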